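(* Let $k$ be a field of characteristic zero, $r\geq1$, $S=k[x_1,x_2,x_3]$, and let $\alpha_1,\alpha_2,\alpha_3$ be the derivations of $S$ given for $k'\in\{1,2,3\}$ by $\alpha_1(x_{k'})=x_{k'}$, $\alpha_2(x_{k'})=x_{k'}(x_{k'}^r-x_1^r)$, $\alpha_3(x_{k'})=x_{k'}(x_{k'}^r-x_1^r)(x_{k'}^r-x_2^r)$, which form an $S$-basis of the Lie–Rinehart algebra $L=\operatorname{Der}\mathcal{A}_r$. In the universal enveloping algebra $U=\mathcal{D}(\mathcal{A}_r)$ of $(S,L)$ define $$u_1=\alpha_3-(x_3^r-x_1^r)\alpha_2+(x_3^r-x_1^r)(x_2^r-x_1^r)\alpha_1,\quad u_2=\alpha_3-(x_3^r-x_2^r)\alpha_2,\quad u_3=\alpha_3.$$ Then $[u_k,x_l]=0$ for all $k,l\in\{1,2,3\}$ with $k\neq l$; in particular $(S,L)$ satisfies the orthogonality condition with the family $(u_1,u_2,u_3)$.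
   Context: $\mathcal{A}_r$ is the hyperplane arrangement in $k^3$ with defining polynomial $x_1x_2x_3(x_2^r-x_1^r)(x_3^r-x_1^r)(x_3^r-x_2^r)$; $\operatorname{Der}\mathcal{A}_r$ is the free $S$-module with basis $\alpha_1,\alpha_2,\alpha_3$ above, a Lie subalgebra of $\operatorname{Der}(S)$, and $\mathcal{D}(\mathcal{A}_r)$ is the subalgebra of $\operatorname{End}_k(S)$ generated by $\operatorname{Der}\mathcal{A}_r$ and multiplications by elements of $S$. In $U$, $[u,x_l]=ux_l-x_lu$. A triangularizable $(S,L)$ with basis $\alpha_1,\ldots,\alpha_n$ satisfies the orthogonality condition if there are $u_1,\ldots,u_n\in U$ of the form $u_k=\alpha_n+\sum_{i=1}^{n-1}f_k^i\alpha_i$ with $f_k^i\in S$ and $[u_k,x_l]=0$ whenever $k\neq l$. *)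

From HB Require Import structures.
From mathcomp Require Import all_boot all_order all_algebra.
From mathcomp.multinomials Require Import mpoly.
Set Implicit Arguments. Unset Strict Implicit. Unset Printing Implicit Defensive.
Import GRing.Theory.
Local Open Scope ring_scope.

(* S = k[x_1,x_2,x_3]; the variable x_{i+1} is 'X_i with i : 'I_3 (0-based). *)
Definition S (k : fieldType) := {mpoly k[3]}.

Definition xv (k : fieldType) (i : 'I_3) : {mpoly k[3]} := 'X_i.

Definition der_of (k : fieldType) (a : 'I_3 -> {mpoly k[3]})
  (p : {mpoly k[3]}) : {mpoly k[3]} :=
  \sum_(i < 3) a i * mderiv i p.

Definition alpha (k : fieldType) (r : nat) (j : 'I_3) : {mpoly k[3]} -> {mpoly k[3]} :=
  let x := @xv k in
  let x1 := x (inord 0) in let x2 := x (inord 1) in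
  der_of (fun i : 'I_3 =>
    if j == inord 0 then x i
    else if j == inord 1 then x i * (x i ^+ r - x1 ^+ r)
    else x i * (x i ^+ r - x1 ^+ r) * (x i ^+ r - x2 ^+ r)).

Arguments alpha : clear implicits.

(* Elements of U = D(A_r) as k-linear endomorphisms of S; multiplication by f *)
Definition mulop (k : fieldType) (f : {mpoly k[3]}) : {mpoly k[3]} -> {mpoly k[3]} :=
  fun p => f * p.

Definition commx (k : fieldType) (u : {mpoly k[3]} -> {mpoly k[3]}) (l : 'I_3)
  : {mpoly k[3]} -> {mpoly k[3]} :=
  fun p => u (@xv k l * p) - @xv k l * u p.

Definition ufam (k : fieldType) (r : nat) (m : 'I_3) : {mpoly k[3]} -> {mpoly k[3]} :=
  let x := @xv k in
  let x1 := x (inord 0) in let x2 := x (inord 1) in let x3 := x (inord 2) in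
  let a := alpha k r in
  if m == inord 0 then
    fun p => a (inord 2) p - (x3 ^+ r - x1 ^+ r) * a (inord 1) p
             + (x3 ^+ r - x1 ^+ r) * (x2 ^+ r - x1 ^+ r) * a (inord 0) p
  else if m == inord 1 then
    fun p => a (inord 2) p - (x3 ^+ r - x2 ^+ r) * a (inord 1) p
  else a (inord 2).

Arguments ufam : clear implicits.

Definition orthogonality_with (k : fieldType)
  (alp : 'I_3 -> {mpoly k[3]} -> {mpoly k[3]})
  (u : 'I_3 -> {mpoly k[3]} -> {mpoly k[3]}) : Prop :=
  (exists f : 'I_3 -> 'I_2 -> {mpoly k[3]},
     forall m p, u m p = alp (inord 2) p + \sum_(i < 2) f m i * alp (widen_ord (leqnSn 2) i) p)
  /\ (forall m l : 'I_3, m != l -> forall p, commx (u m) l p = 0).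

(* Each u_k is an S-linear combination of derivations of S, so [u_k, x_l] is
   multiplication by the polynomial u_k(x_l).  Since alpha_j(x_l) vanishes for
   l < j, the coefficients of u_k are chosen exactly so that u_k(x_l) = 0 for
   l <> k, which is a polynomial identity valid over any field and for every r. *)
From HB Require Import structures.
From mathcomp Require Import all_boot all_order all_algebra.
From mathcomp.multinomials Require Import mpoly.
From mathcomp Require Import ring.
Local Open Scope ring_scope.
Import GRing.Theory.

Lemma mderiv_mpolyX (n : nat) (R : nzRingType) (i l : 'I_n) :
  mderiv i ('X_l : {mpoly R[n]}) = (l == i)%:R.
Proof.
rewrite mderivX mnm1E; case: eqP => [->|_]; last by rewrite scale0r.
have -> : (U_(i) - U_(i) = 0)%MM by apply/mnmP => j; rewrite mnmBE subnn mnm0E.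
by rewrite mpolyX0 scale1r.
Qed.

Section DerOf.
Variable k : fieldType.
Implicit Types (a : 'I_3 -> {mpoly k[3]}) (p q : {mpoly k[3]}).

Lemma der_ofM a p q : der_of a (p * q) = der_of a p * q + p * der_of a q.
Proof.
by rewrite /der_of !big_ord_recr !big_ord0 /= !mderivM; ring.
Qed.

Lemma der_ofX a l : der_of a (xv k l) = a l.
Proof.
rewrite /der_of /xv (bigD1 l) //= mderiv_mpolyX eqxx mulr1 big1 ?addr0 //.
by move=> i /negPf; rewrite mderiv_mpolyX eq_sym => ->; rewrite mulr0.
Qed.

End DerOf.

Lemma ord3_cases (l : 'I_3) : [\/ l = inord 0, l = inord 1 | l = inord 2].
Proof.
by case: l => [[|[|[|?]]] ?] //; [apply: Or31 | apply: Or32 | apply: Or33];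
  apply: val_inj; rewrite /= inordK.
Qed.

Lemma inord3_eq (i j : nat) : (i < 3)%N -> (j < 3)%N ->
  ((inord i : 'I_3) == inord j) = (i == j).
Proof. by move=> hi hj; rewrite -val_eqE /= !inordK. Qed.

Section OrthogonalFamily.
Variables (k : fieldType) (r : nat).

Lemma alphaM (j : 'I_3) (p q : {mpoly k[3]}) :
  alpha k r j (p * q) = alpha k r j p * q + p * alpha k r j q.
Proof. exact: der_ofM. Qed.

Lemma commx_ufam (m l : 'I_3) (p : {mpoly k[3]}) :
  commx (ufam k r m) l p = ufam k r m (xv k l) * p.
Proof.
by case: (ord3_cases m) => ->; rewrite /commx /ufam ?inord3_eq //=;
  rewrite !(alphaM _ (xv k l)); ring.
Qed.

Lemma ufam_X_eq0 (m l : 'I_3) : m != l -> ufam k r m (xv k l) = 0.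
Proof.
case: (ord3_cases m) => ->; case: (ord3_cases l) => ->; rewrite ?inord3_eq // => _;
  by rewrite /ufam /alpha ?inord3_eq //= !der_ofX ?inord3_eq //=; ring.
Qed.

Lemma ufam_triangular :
  exists f : 'I_3 -> 'I_2 -> {mpoly k[3]}, forall m p,
    ufam k r m p = alpha k r (inord 2) p
                   + \sum_(i < 2) f m i * alpha k r (widen_ord (leqnSn 2) i) p.
Proof.
pose x i := xv k (inord i).
exists (fun m i =>
  if m == inord 0 then
    if i == ord0 then (x 2 ^+ r - x 0 ^+ r) * (x 1 ^+ r - x 0 ^+ r)
    else - (x 2 ^+ r - x 0 ^+ r)
  else if m == inord 1 then
    if i == ord0 then 0 else - (x 2 ^+ r - x 1 ^+ r)
  else 0).
move=> m p; rewrite big_ord_recr big_ord1 /=.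
have -> : widen_ord (leqnSn 2) (widen_ord (leqnSn 1) ord0) = inord 0 :> 'I_3.
  by apply: val_inj; rewrite /= inordK.
have -> : widen_ord (leqnSn 2) ord_max = inord 1 :> 'I_3.
  by apply: val_inj; rewrite /= inordK.
by case: (ord3_cases m) => ->; rewrite /ufam ?inord3_eq //=; ring.
Qed.

End OrthogonalFamily.

Theorem proposition1p24 (k : fieldType) (hchar : [pchar k] =i pred0)
  (r : nat) (hr : (1 <= r)%N) :
  (forall m l : 'I_3, m != l -> forall p : {mpoly k[3]},
      commx (ufam k r m) l p = 0)
  /\ orthogonality_with (alpha k r) (ufam k r).
Proof.
have commx_ufam_eq0 m l : m != l -> forall p, commx (ufam k r m) l p = 0.
  by move=> neq_ml p; rewrite commx_ufam ufam_X_eq0 // mul0r.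
by split=> //; split=> //; apply: ufam_triangular.
Qed.
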